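(* For every finite subset $B\subseteq A$, the set $\{b\in\mathrm{Cl}(B)\mid \mathrm{pr}_3(b)\neq0\}$ is finite.
   Context: Let $\langle P,\preccurlyeq,\preccurlyeq^\ast\rangle$ be a doubly ordered set: $\preccurlyeq$ a partial order on $P$, $\preccurlyeq^\ast$ a preorder on $P$, and $p\preccurlyeq q\Rightarrow p\preccurlyeq^\ast q$. Write $p\prec q$ for ($p\preccurlyeq q$ and $p\neq q$). For a quadruple $\langle x_0,x_1,x_2,x_3\rangle$ and $i<4$, $\mathrm{pr}_i(\langle x_0,x_1,x_2,x_3\rangle)=x_i$. Define recursively $A_0=\{\langle0,p,\varnothing,k\rangle\mid p\in P,k\in\omega\}$ and $A_{n+1}=A_n\cup\{\langle n+1,q,a,0\rangle\mid q\in P,a\in A_n,\mathrm{pr}_1(a)\prec q\}\cup\{\langle n+1,q,a,k\rangle\mid q\in P,a\in A_n,\mathrm{pr}_1(a)\not\preccurlyeq q,\mathrm{pr}_1(a)\preccurlyeq^\ast q,k\in\omega\}$; let $A=\bigcup_{n}A_n$. A subset $C\subseteq A$ is closed if (i) for all $n\in\omega$, all $a\in C\cap A_n$ and all $q\in P$ with $\mathrm{pr}_1(a)\prec q$, we have $\langle n+1,q,a,0\rangle\in C$, and (ii) for all $b\in C\setminus A_0$, $\mathrm{pr}_2(b)\in C$. For $B\subseteq A$, $\mathrm{Cl}(B)$ is the least closed subset of $A$ including $B$. *)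

From Stdlib Require Import List.

Set Implicit Arguments.

(* Quadruples <x0,x1,x2,x3> with x0 a level, x1 a point of P, x2 either the
   empty set (None) or an earlier quadruple (Some a), x3 a natural number. *)
Inductive quad (P : Type) : Type :=
  Quad : nat -> P -> option (quad P) -> nat -> quad P.

Section Defs.
Variable P : Type.
Variables le les : P -> P -> Prop.

Definition pr0 (x : quad P) : nat := match x with Quad n _ _ _ => n end.
Definition pr1 (x : quad P) : P := match x with Quad _ p _ _ => p end.
Definition pr2 (x : quad P) : option (quad P) := match x with Quad _ _ a _ => a end.
Definition pr3 (x : quad P) : nat := match x with Quad _ _ _ k => k end.

Definition lt (p q : P) : Prop := le p q /\ p <> q.

Definition partial_order (r : P -> P -> Prop) : Prop :=
  (forall p, r p p) /\ (forall p q, r p q -> r q p -> p = q) /\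
  (forall p q s, r p q -> r q s -> r p s).

Definition preorder (r : P -> P -> Prop) : Prop :=
  (forall p, r p p) /\ (forall p q s, r p q -> r q s -> r p s).

Definition doubly_ordered : Prop :=
  partial_order le /\ preorder les /\ (forall p q, le p q -> les p q).

Fixpoint An (n : nat) : quad P -> Prop :=
  match n with
  | 0 => fun x => exists p k, x = Quad 0 p None k
  | S m => fun x =>
      An m x
      \/ (exists q a, x = Quad (S m) q (Some a) 0 /\ An m a /\ lt (pr1 a) q)
      \/ (exists q a k, x = Quad (S m) q (Some a) k /\ An m a /\
            ~ le (pr1 a) q /\ les (pr1 a) q)
  end.

Definition A (x : quad P) : Prop := exists n, An n x.

Definition closed (C : quad P -> Prop) : Prop :=
  (forall x, C x -> A x) /\
  (forall n a q, C a -> An n a -> lt (pr1 a) q -> C (Quad (S n) q (Some a) 0)) /\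
  (forall b, C b -> ~ An 0 b -> exists a, pr2 b = Some a /\ C a).

Definition Cl (B : quad P -> Prop) (x : quad P) : Prop :=
  forall C, closed C -> (forall y, B y -> C y) -> C x.

End Defs.

Definition finite_set (T : Type) (S : T -> Prop) : Prop :=
  exists l : list T, forall x, S x -> In x l.

(* Every element of Cl(B) arises from an ancestor (iterated pr2) of an
   element of B by successive steps a |-> <n+1,q,a,0>: the elements of A
   obtained this way form a closed set containing B.  Such steps only produce
   quadruples with last coordinate 0, so the elements of Cl(B) with
   pr3 <> 0 lie in the finite set of ancestors of B. *)
From Stdlib Require Import List.

Section Closure.
Variable P : Type.
Variables le les : P -> P -> Prop.

Fixpoint ancestors (x : quad P) : list (quad P) :=
  match x with
  | Quad n p o k => Quad n p o k :: match o with Some a => ancestors a | None => nil end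
  end.

Definition parent_closed (L : list (quad P)) : Prop :=
  forall b a, In b L -> pr2 b = Some a -> In a L.

Lemma ancestors_self x : In x (ancestors x).
Proof. destruct x; simpl; auto. Qed.

Fixpoint ancestors_parent_closed x : parent_closed (ancestors x).
Proof.
  destruct x as [n p [c|] k]; intros b a [<- | Hb] Hba; simpl in *.
  - injection Hba as <-. right. apply ancestors_self.
  - right. exact (ancestors_parent_closed c b a Hb Hba).
  - discriminate.
  - contradiction.
Qed.

Lemma flat_map_ancestors_parent_closed l :
  parent_closed (flat_map ancestors l).
Proof.
  intros b a Hb Hba. apply in_flat_map in Hb as [y [Hy Hby]].
  apply in_flat_map. exists y. split; [exact Hy|].
  exact (ancestors_parent_closed y b a Hby Hba).
Qed.

Lemma An_parent n b a : An le les n b -> pr2 b = Some a -> A le les a.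
Proof.
  revert b; induction n as [|n IH]; intros b Hb Hba; simpl in Hb.
  - destruct Hb as [p [k ->]]. discriminate.
  - destruct Hb as [Hb | [[q [c [-> [Hc _]]]] | [q [c [k [-> [Hc _]]]]]]].
    + exact (IH b Hb Hba).
    + injection Hba as <-. exists n. exact Hc.
    + injection Hba as <-. exists n. exact Hc.
Qed.

Lemma An_parentless n b : An le les n b -> pr2 b = None -> An le les 0 b.
Proof.
  revert b; induction n as [|n IH]; intros b Hb Hb0; simpl in Hb; [exact Hb|].
  destruct Hb as [Hb | [[q [c [-> _]]] | [q [c [k [-> _]]]]]].
  - exact (IH b Hb Hb0).
  - discriminate.
  - discriminate.
Qed.

Inductive zero_extension (L : list (quad P)) : quad P -> Prop :=
| zero_extension_base x : In x L -> zero_extension L x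
| zero_extension_step n q a :
    zero_extension L a -> zero_extension L (Quad n q (Some a) 0).

Lemma zero_extension_pr3 L x : zero_extension L x -> pr3 x <> 0 -> In x L.
Proof. intros [y Hy | n q a _] H3; [exact Hy | contradiction H3; reflexivity]. Qed.

Lemma closed_zero_extension L : parent_closed L ->
  closed le les (fun x => A le les x /\ zero_extension L x).
Proof.
  intros HL. split; [|split].
  - intros x [Hx _]. exact Hx.
  - intros n a q [_ Ha] Han Hlt. split.
    + exists (S n). simpl. right. left. exists q, a. auto.
    + apply zero_extension_step. exact Ha.
  - intros b [[m Hb] Db] Hb0.
    destruct (pr2 b) as [a|] eqn:Hba.
    2: { contradiction Hb0. exact (An_parentless m b Hb Hba). }
    exists a. split; [reflexivity|]. split; [exact (An_parent m b a Hb Hba)|].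
    destruct Db as [b Hin | n q c Dc].
    + apply zero_extension_base. exact (HL b a Hin Hba).
    + simpl in Hba. injection Hba as <-. exact Dc.
Qed.

Lemma Cl_zero_extension (B : quad P -> Prop) L :
  parent_closed L -> (forall y, B y -> A le les y /\ In y L) ->
  forall x, Cl le les B x -> zero_extension L x.
Proof.
  intros HL HB x Hx.
  apply (Hx _ (closed_zero_extension L HL)).
  intros y By. destruct (HB y By) as [Ay Hy].
  split; [exact Ay | apply zero_extension_base; exact Hy].
Qed.

End Closure.

Arguments ancestors {P} x.

Theorem lemma2p2 (P : Type) (le les : P -> P -> Prop)
  (Hdo : doubly_ordered le les)
  (B : quad P -> Prop)
  (HBA : forall x, B x -> A le les x)
  (HBfin : finite_set B) :
  finite_set (fun b => Cl le les B b /\ pr3 b <> 0).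
Proof.
  destruct HBfin as [l Hl].
  set (L := flat_map ancestors l).
  exists L. intros b [Hb Hb3].
  apply (zero_extension_pr3 P L b); [|exact Hb3].
  apply (Cl_zero_extension P le les B L (flat_map_ancestors_parent_closed P l)); [|exact Hb].
  intros y By. split; [exact (HBA y By)|].
  apply in_flat_map. exists y. split; [exact (Hl y By) | apply ancestors_self].
Qed.
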